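(* Let $p\ge 3$ be prime and $q=p^r>3$. Then for every $n\ge 1$ there exists a local permutation polynomial $f\in\mathbb{F}_q[x_1,\dots,x_n]$ of degree $n(q-2)$.
   Context: $\mathbb{F}_q$ is the finite field with $q$ elements. A polynomial $f\in\mathbb{F}_q[x_1,\dots,x_n]$ is a local permutation polynomial (LPP) if, for each $i$ and each choice of the other coordinates $(a_j)_{j\ne i}\in\mathbb{F}_q^{n-1}$, the univariate polynomial in $x_i$ obtained by fixing $x_j=a_j$ for $j\ne i$ induces a bijection of $\mathbb{F}_q$. Polynomials are reduced (degree $<q$ in each variable), and degree means total degree. *)

From HB Require Import structures.
From mathcomp Require Import all_boot all_order all_algebra.
From mathcomp Require Import mpoly.
Set Implicit Arguments. Unset Strict Implicit. Unset Printing Implicit Defensive.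
Import GRing.Theory.
Local Open Scope ring_scope.

(* total degree (msize p = 1 + total degree, and 0 for p = 0) *)
Definition tdeg (F : nzRingType) (n : nat) (f : {mpoly F[n]}) : nat := (msize f).-1.

Definition reduced_mpoly (F : finFieldType) (n : nat) (f : {mpoly F[n]}) : Prop :=
  forall m, m \in msupp f -> forall i : 'I_n, (m i < #|F|)%N.

Definition is_LPP (F : finFieldType) (n : nat) (f : {mpoly F[n]}) : Prop :=
  forall (i : 'I_n) (a : 'I_n -> F),
    bijective (fun c : F => f.@[fun j : 'I_n => if j == i then c else a j]).

From HB Require Import structures.
From mathcomp Require Import all_boot all_order all_algebra.
From mathcomp Require Import mpoly.
From mathcomp Require Import all_field.
From mathcomp Require Import ring zify.
Set Implicit Arguments. Unset Strict Implicit. Unset Printing Implicit Defensive.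
Import GRing.Theory.
Local Open Scope ring_scope.

(* The map cfrac : F^n -> F obtained by iterating t, c |-> (t + c^-1)^-1 from t = 1
   is injective in each argument, so its interpolation polynomial is a reduced local
   permutation polynomial.  Summing over one variable kills every monomial of degree
   q - 1 in that variable, hence all exponents are at most q - 2, and the coefficient
   of (x_1 ... x_n)^(q-2) is (-1)^n times the moment M_n = sum_a cfrac(a) a_1 ... a_n.
   Power sums over F give M_0 = 1, M_1 = 2 and M_(n+2) = -4 M_n, so M_n <> 0 in odd
   characteristic and the degree is exactly n (q - 2). *)

Section FiniteFieldSums.
Variable F : finFieldType.
Local Notation q := #|F|.

Lemma natr_card : q%:R = 0 :> F.
Proof.
have : \sum_v v = \sum_v (v + 1) :> F := reindex_inj (addIr 1).
rewrite big_split sumr_const /=.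
by move/eqP; rewrite -subr_eq0 opprD addrA subrr sub0r oppr_eq0 => /eqP.
Qed.

Lemma sum_expr_eq0 k (c : F) : c != 0 -> c ^+ k != 1 -> \sum_v v ^+ k = 0 :> F.
Proof.
move=> c0 ck; have : \sum_v v ^+ k = \sum_v (c * v) ^+ k := reindex_inj (mulfI c0).
under [in RHS]eq_bigr do rewrite exprMn; rewrite -mulr_sumr.
move/eqP; rewrite -subr_eq0 -{1}[\sum_v _]mul1r -mulrBl mulf_eq0 subr_eq0 eq_sym.
by rewrite (negbTE ck) => /eqP.
Qed.

Lemma sum_mulfV : \sum_v v * v^-1 = -1 :> F.
Proof.
have dirac (v : F) : v * v^-1 = 1 - (v == 0)%:R.
  by case: (eqVneq v 0) => [->|v0]; rewrite ?mul0r ?subrr // mulfV ?subr0.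
under eq_bigr do rewrite dirac.
rewrite sumrB sumr_const natr_card (bigD1 0) //= eqxx big1 ?addr0 ?sub0r // => v.
by move/negbTE->.
Qed.

Hypothesis card_gt3 : (3 < q)%N.

Lemma exists_sqr_neq1 : exists2 c : F, c != 0 & c ^+ 2 != 1.
Proof.
apply/exists_inP; apply: contraLR card_gt3 => /exists_inPn small; rewrite -leqNgt.
apply: leq_trans (card_size [:: 0; 1; -1]).
apply/subset_leq_card/subsetP => x _; move: (small x); rewrite !inE sqrf_eq1 negbK.
by case: (eqVneq x 0) => [//|x0 /(_ x0) ->]; rewrite orbT.
Qed.

Lemma sum_id : \sum_v v = 0 :> F.
Proof.
have [c c0 c2] := exists_sqr_neq1.
have c1 : c != 1 by apply: contra c2 => /eqP->; rewrite expr1n.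
exact: (sum_expr_eq0 (k := 1) c0 c1).
Qed.

Lemma sum_sqr : \sum_v v ^+ 2 = 0 :> F.
Proof. by have [c c0 c2] := exists_sqr_neq1; apply: sum_expr_eq0 c0 c2. Qed.

Lemma sum_inv : \sum_v v^-1 = 0 :> F.
Proof. by rewrite -[RHS]sum_id [RHS](reindex_inj invr_inj). Qed.

Lemma sum_invsqr : \sum_v v^-1 ^+ 2 = 0 :> F.
Proof. by rewrite -[RHS]sum_sqr [RHS](reindex_inj invr_inj). Qed.

End FiniteFieldSums.

Lemma sum_tuple_cons (T : finType) (R : nmodType) n (G : n.+1.-tuple T -> R) :
  \sum_u G u = \sum_x \sum_(t : n.-tuple T) G [tuple of x :: t].
Proof.
rewrite pair_big /=; apply: (reindex (fun p : T * n.-tuple T => [tuple of p.1 :: p.2])).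
exists (fun u => (thead u, [tuple of behead u])) => [[x t] _ | u _] /=.
  by congr pair; apply: val_inj.
by rewrite [RHS]tuple_eta.
Qed.

Section ContinuedFraction.
Variable F : finFieldType.
Hypothesis card_gt3 : (3 < #|F|)%N.

(* With 0^-1 = 0 the step is a bijection in each argument, including at c = 0. *)
Definition cfstep (t c : F) : F := (t + c^-1)^-1.

Lemma cfstep_inj t : injective (cfstep t).
Proof. by move=> c d /invr_inj/addrI/invr_inj. Qed.

Lemma cfstep_injl c : injective (cfstep^~ c).
Proof. by move=> s t /invr_inj/addIr. Qed.

Lemma sum_mul_cfstep t : \sum_c c * cfstep t c = 2 * t^-1 ^+ 2.
Proof.
rewrite (reindex_inj invr_inj) /=; under eq_bigr do rewrite /cfstep invrK.
have [->|t0] := eqVneq t 0.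
  by under eq_bigr do rewrite add0r -expr2; rewrite sum_invsqr // invr0 expr0n mulr0.
have partial_fractions s : s^-1 * (t + s)^-1 =
    t^-1 * (s^-1 - (t + s)^-1) + t^-1 ^+ 2 * ((s == 0)%:R + (s == - t)%:R).
  have [->|s0] := eqVneq s 0; first by rewrite eq_sym oppr_eq0 (negbTE t0) invr0 !addr0 /=; ring.
  have [->|st] := eqVneq s (- t); first by rewrite subrr invr0 invrN /=; ring.
  have ts : t + s != 0 by apply: contra st; rewrite addrC addr_eq0.
  by rewrite !addr0 mulr0 addr0; field; rewrite ts s0 t0.
under eq_bigr do rewrite partial_fractions.
rewrite big_split /= -!mulr_sumr sumrB big_split /= sum_inv //.
have -> : \sum_s (t + s)^-1 = 0 :> F.
  by rewrite -[RHS](sum_inv card_gt3) [RHS](reindex_inj (addrI t)).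
rewrite subrr mulr0 add0r.
rewrite (bigD1 0) //= eqxx big1 ?addr0; last by move=> v /negbTE ->.
rewrite (bigD1 (- t)) //= eqxx big1 ?addr0; last by move=> v /negbTE ->.
by rewrite mulrC.
Qed.

Lemma sum_mul_cfstep2 t : \sum_c \sum_d c * d * cfstep (cfstep t d) c = -4 * t.
Proof.
transitivity (\sum_d d * (2 * (t + d^-1) ^+ 2)).
  rewrite exchange_big; apply: eq_bigr => d _.
  rewrite -[in RHS](invrK (t + _)) -sum_mul_cfstep mulr_sumr.
  by apply: eq_bigr => c _; rewrite mulrCA mulrA.
have expand (d : F) : d * (2 * (t + d^-1) ^+ 2) =
    2 * t ^+ 2 * d + 4 * t * (d * d^-1) + 2 * d^-1.
  by have [->|d0] := eqVneq d 0; [rewrite invr0 !(mul0r, mulr0, addr0) | field].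
under eq_bigr do rewrite expand.
by rewrite !big_split /= -!mulr_sumr sum_id // sum_mulfV sum_inv //; ring.
Qed.

Definition cfrac (s : seq F) : F := foldr (fun c t => cfstep t c) 1 s.

Lemma foldr_cfstep_inj (s : seq F) : injective (fun t => foldr (fun c t => cfstep t c) t s).
Proof. by elim: s => [//|c s IH] t u /cfstep_injl/IH. Qed.

Lemma cfrac_update_inj (I : eqType) (s : seq I) (a : I -> F) i :
  i \in s -> uniq s -> injective (fun c => cfrac [seq if j == i then c else a j | j <- s]).
Proof.
move=> /splitPr[s1 s2]; rewrite cat_uniq /= => /and3P[_ /norP[i_s1 _] /andP[i_s2 _]].
have map_a s' c : i \notin s' -> [seq if j == i then c else a j | j <- s'] = map a s'.
  by move=> i_s'; apply/eq_in_map => j js; case: eqP => // ji; rewrite -ji js in i_s'.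
move=> c d; rewrite !map_cat /= !eqxx !map_a // /cfrac !foldr_cat /=.
by move/foldr_cfstep_inj/cfstep_inj.
Qed.

Definition cfrac_moment n : F := \sum_(a : n.-tuple F) cfrac a * \prod_(x <- a) x.

Lemma cfrac_moment0 : cfrac_moment 0 = 1.
Proof.
by rewrite /cfrac_moment (big_pred1 [tuple]) ?big_nil ?mulr1 // => t; apply/esym/eqP/tuple0.
Qed.

Lemma cfrac_moment1 : cfrac_moment 1 = 2.
Proof.
have := sum_mul_cfstep 1; rewrite invr1 expr1n mulr1 => <-.
rewrite /cfrac_moment sum_tuple_cons; apply: eq_bigr => c _.
by rewrite (big_pred1 [tuple]) => [|t]; [rewrite big_seq1 mulrC | apply/esym/eqP/tuple0].
Qed.

Lemma cfrac_momentSS n : cfrac_moment n.+2 = -4 * cfrac_moment n.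
Proof.
rewrite /cfrac_moment sum_tuple_cons.
under eq_bigr do rewrite sum_tuple_cons exchange_big.
rewrite exchange_big mulr_sumr; apply: eq_bigr => t _.
rewrite mulrA -sum_mul_cfstep2 mulr_suml; apply: eq_bigr => c _.
rewrite mulr_suml; apply: eq_bigr => d _.
by rewrite !big_cons /=; ring.
Qed.

Lemma cfrac_moment_neq0 n : (2 : F) != 0 -> cfrac_moment n != 0.
Proof.
move=> two0; have four0 : (-4 : F) != 0 by rewrite oppr_eq0 (natrM _ 2 2) mulf_neq0.
elim/ltn_ind: n => -[|[|n]] IH; rewrite ?cfrac_moment0 ?cfrac_moment1 ?oner_eq0 //.
by rewrite cfrac_momentSS mulf_neq0 ?IH.
Qed.

End ContinuedFraction.

Section Interpolation.
Variables (F : finFieldType) (n : nat).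
Local Notation q := #|F|.

Lemma sum_geometric_card (a x : F) : \sum_(k < q) a ^+ (q.-1 - k) * x ^+ k = (x != a)%:R.
Proof.
have q_gt0 : (0 < q)%N by apply/card_gt0P; exists 0.
have [->|xa] := eqVneq x a.
  have -> : \sum_(k < q) a ^+ (q.-1 - k) * a ^+ k = \sum_(k < q) a ^+ q.-1.
    by apply: eq_bigr => k _; rewrite -exprD subnK // -ltnS prednK.
  by rewrite sumr_const card_ord -[_ *+ _]mulr_natr natr_card mulr0.
have := subrXX a x q; rewrite !expf_card -{1}[a - x]mulr1 => /mulfI <- //.
by rewrite subr_eq0 eq_sym.
Qed.

Definition delta_coef (k : nat) (a : F) : F :=
  if k == 0%N then 1 - a ^+ q.-1 else - a ^+ (q.-1 - k).

Lemma sum_delta_coef (a x : F) : \sum_(k < q) delta_coef k a * x ^+ k = (x == a)%:R.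
Proof.
have q_gt0 : (0 < q)%N by apply/card_gt0P; exists 0.
have coef k : delta_coef k a * x ^+ k = (k == 0%N)%:R - a ^+ (q.-1 - k) * x ^+ k.
  by rewrite /delta_coef; case: eqP => [->|_]; rewrite ?subn0 ?mulr1 ?mulNr ?sub0r.
under eq_bigr do rewrite coef.
rewrite sumrB sum_geometric_card.
rewrite (bigD1 (Ordinal q_gt0)) //= big1 ?addr0 => [|k /negbTE k0]; last first.
  by rewrite -val_eqE /= in k0; rewrite k0.
by case: (x == a); rewrite ?subrr ?subr0.
Qed.

Definition mnm_of (m : {ffun 'I_n -> 'I_q}) : 'X_{1..n} := [multinom (m i : nat) | i < n].

Lemma mnm_of_inj : injective mnm_of.
Proof.
by move=> m m' /mnmP eq_mm'; apply/ffunP => i; apply/val_inj; have := eq_mm' i; rewrite !mnmE.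
Qed.

Lemma prod_eq_tnth (x : 'I_n -> F) (a : n.-tuple F) :
  \prod_i (x i == tnth a i)%:R = (a == [tuple x i | i < n])%:R :> F.
Proof.
have [->|neq] := eqVneq a [tuple x i | i < n].
  by rewrite big1 // => i _; rewrite tnth_mktuple eqxx.
have [i /negbTE neq_i] : exists i, x i != tnth a i.
  apply/existsP; apply: contraR neq => /existsPn eq_xa; apply/eqP/eq_from_tnth => i.
  by rewrite tnth_mktuple; have := eq_xa i; rewrite negbK => /eqP.
by rewrite (bigD1 i) //= neq_i mul0r.
Qed.

Definition tuple_update (a : n.-tuple F) (i : 'I_n) (c : F) : n.-tuple F :=
  [tuple if j == i then c else tnth a j | j < n].

Lemma tuple_updateK (a : n.-tuple F) i c d :
  tuple_update (tuple_update a i c) i d = tuple_update a i d.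
Proof. by apply: eq_from_tnth => j; rewrite !tnth_mktuple; case: eqP. Qed.

Lemma tuple_update_tnth (a : n.-tuple F) i : tuple_update a i (tnth a i) = a.
Proof. by apply: eq_from_tnth => j; rewrite tnth_mktuple; case: eqP => [->|]. Qed.

Lemma sum_tuple_coord (R : nmodType) (G : n.-tuple F -> R) i :
  \sum_a G a = \sum_(a | tnth a i == 0) \sum_c G (tuple_update a i c).
Proof.
rewrite (partition_big (fun a => tnth a i) predT) //= exchange_big /=; apply: eq_bigr => c _.
rewrite (reindex_onto (fun a => tuple_update a i c) (fun a => tuple_update a i 0)) /=.
  apply: eq_bigl => a; rewrite tnth_mktuple !eqxx tuple_updateK /=.
  apply/eqP/eqP => [<-|a_i]; first by rewrite tnth_mktuple eqxx.
  by rewrite -a_i tuple_update_tnth.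
by move=> a /eqP a_i; rewrite tuple_updateK -a_i tuple_update_tnth.
Qed.

Variable g : n.-tuple F -> F.

Definition interp_coef (m : {ffun 'I_n -> 'I_q}) : F :=
  \sum_(a : n.-tuple F) g a * \prod_i delta_coef (m i) (tnth a i).

Definition interp : {mpoly F[n]} := \sum_m interp_coef m *: 'X_[mnm_of m].

Lemma interp_eval x : interp.@[x] = g [tuple x i | i < n].
Proof.
have interp_tuple (a : n.-tuple F) :
    \sum_(m : {ffun 'I_n -> 'I_q})
      g a * \prod_i delta_coef (m i) (tnth a i) * \prod_i x i ^+ mnm_of m i
    = g a * (a == [tuple x i | i < n])%:R.
  rewrite -prod_eq_tnth -(eq_bigr _ (fun i _ => sum_delta_coef _ _)) bigA_distr_bigA mulr_sumr.
  by apply: eq_bigr => m _; rewrite -mulrA -big_split; under eq_bigr do rewrite mnmE.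
rewrite raddf_sum /=; under eq_bigr do rewrite mevalZ mevalX /interp_coef mulr_suml.
rewrite exchange_big /=; under eq_bigr do rewrite interp_tuple.
by rewrite (bigD1 [tuple x i | i < n]) //= eqxx mulr1 big1 ?addr0 // => a /negbTE->; rewrite mulr0.
Qed.

Lemma mcoeff_interp m : interp@_(mnm_of m) = interp_coef m.
Proof.
rewrite raddf_sum /= (bigD1 m) //= mcoeffZ mcoeffX eqxx mulr1 big1 ?addr0 // => m' neq_m'.
by rewrite mcoeffZ mcoeffX (inj_eq mnm_of_inj) (negbTE neq_m') mulr0.
Qed.

Lemma msupp_interp mm : mm \in msupp interp -> exists m, mm = mnm_of m.
Proof.
rewrite mcoeff_msupp => nz.
have [m /eqP ->|none] := pickP (fun m => mm == mnm_of m); first by exists m.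
move: nz; rewrite raddf_sum /= big1 ?eqxx // => m _.
by rewrite mcoeffZ mcoeffX eq_sym none mulr0.
Qed.

Lemma interp_reduced : reduced_mpoly interp.
Proof. by move=> _ /msupp_interp[m ->] i; rewrite mnmE. Qed.

Hypothesis g_local_perm :
  forall i (a : 'I_n -> F), injective (fun c => g [tuple if j == i then c else a j | j < n]).

Lemma interp_LPP : is_LPP interp.
Proof. by move=> i a; apply: injF_bij => c d /=; rewrite !interp_eval => /g_local_perm. Qed.

Hypothesis card_gt3 : (3 < q)%N.

Lemma interp_coef_max (m : {ffun 'I_n -> 'I_q}) i : (m i : nat) = q.-1 -> interp_coef m = 0.
Proof.
move=> m_i; rewrite /interp_coef (sum_tuple_coord _ i); apply: big1 => a _.
have q1_neq0 : (q.-1 == 0)%N = false by apply/eqP; lia.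
transitivity (\sum_c g (tuple_update a i c) * - \prod_(j | j != i) delta_coef (m j) (tnth a j)).
  apply: eq_bigr => c _; rewrite (bigD1 i) //= tnth_mktuple eqxx /delta_coef m_i q1_neq0.
  rewrite subnn expr0 mulN1r; congr (_ * - _); apply: eq_bigr => j /negbTE j_i.
  by rewrite tnth_mktuple j_i.
have sum_g0 : \sum_c g (tuple_update a i c) = 0.
  by rewrite -[RHS](sum_id card_gt3) [RHS](reindex_inj (@g_local_perm i (tnth a))).
by rewrite -mulr_suml sum_g0 mul0r.
Qed.

Lemma tdeg_interp : \sum_a g a * \prod_(x <- a) x != 0 -> tdeg interp = (n * (q - 2))%N.
Proof.
move=> moment_neq0; have q2_lt_q : (q - 2 < q)%N by lia.
pose top : {ffun 'I_n -> 'I_q} := [ffun=> Ordinal q2_lt_q].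
have coef_top : interp_coef top = (-1) ^+ n * \sum_a g a * \prod_(x <- a) x.
  rewrite /interp_coef mulr_sumr; apply: eq_bigr => a _; rewrite big_tuple mulrCA.
  congr (_ * _); rewrite -[in (-1) ^+ n](card_ord n) -prodrN; apply: eq_bigr => i _.
  have q2_neq0 : (q - 2 == 0)%N = false by apply/eqP; lia.
  rewrite ffunE /delta_coef /= q2_neq0.
  have -> : (q.-1 - (q - 2) = 1)%N by lia.
  by rewrite expr1.
have deg_top : mdeg (mnm_of top) = (n * (q - 2))%N.
  by rewrite mdegE; under eq_bigr do rewrite mnmE ffunE; rewrite sum_nat_const card_ord.
have top_supp : mnm_of top \in msupp interp.
  by rewrite mcoeff_msupp mcoeff_interp coef_top mulf_neq0 ?signr_eq0.
have size_le : (msize interp <= (n * (q - 2)).+1)%N.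
  rewrite msizeE; apply/bigmax_leqP_seq => _ /[dup] /msupp_interp[m ->] m_supp _.
  rewrite ltnS mdegE -[n in (n * _)%N]card_ord -sum_nat_const; apply: leq_sum => i _.
  rewrite mnmE; have m_i_lt := ltn_ord (m i).
  suff : (m i : nat) != q.-1 by lia.
  apply: contraTneq m_supp => /interp_coef_max.
  by rewrite mcoeff_msupp mcoeff_interp => ->; rewrite eqxx.
by have := msize_mdeg_lt top_supp; rewrite deg_top /tdeg; lia.
Qed.

End Interpolation.

Lemma cfrac_local_perm (F : finFieldType) n i (a : 'I_n -> F) :
  injective (fun c => cfrac [tuple if j == i then c else a j | j < n]).
Proof. exact: cfrac_update_inj (mem_enum _ i) (enum_uniq _). Qed.

Theorem mainTheorem13 (p r n : nat) (F : finFieldType) :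
  prime p -> (3 <= p)%N -> (3 < p ^ r)%N -> #|F| = (p ^ r)%N -> (1 <= n)%N ->
  exists f : {mpoly F[n]},
    reduced_mpoly f /\ is_LPP f /\ tdeg f = (n * (p ^ r - 2))%N.
Proof.
move=> p_prime p_ge3 q_gt3 card_F _.
have card_gt3 : (3 < #|F|)%N by rewrite card_F.
have two_neq0 : (2 : F) != 0.
  rewrite -(dvdn_pcharf (card_finPcharP card_F p_prime)).
  by apply: contraL p_ge3 => /dvdn_leq; rewrite -ltnNge; apply.
exists (interp (@cfrac F)); split; first exact: interp_reduced.
split; first exact/interp_LPP/cfrac_local_perm.
rewrite -card_F tdeg_interp //; first exact: cfrac_local_perm.
exact: cfrac_moment_neq0.
Qed.
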